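(* Let $n\ge1$, $m\ge 2$, let $\rho_1$ be an $n$-qubit density matrix at time $t_1$, and for each $\alpha=1,\dots,m-1$ let $\mathcal{M}_{\alpha+1|\alpha}$ be a CPTP map on $n$ qubits applied between times $t_\alpha$ and $t_{\alpha+1}$, with Choi–Jamiołkowski matrix $M_{\alpha,\alpha+1}:=\sum_{i,j=0}^{2^n-1}(|i\rangle\langle j|)^T\otimes\mathcal{M}_{\alpha+1|\alpha}(|i\rangle\langle j|)$ acting on $H_\alpha\otimes H_{\alpha+1}$. For $2\le k\le m$ let $R_{12\dots k}$ denote the $k$-time $n$-qubit pseudo-density matrix (defined in the context) of the process restricted to times $t_1,\dots,t_k$. Then $R_{12}=\tfrac12(\rho M_{12}+M_{12}\rho)$ with $\rho=\rho_1\otimes\mathbb{1}_2$, and for every $3\le k\le m$, $$R_{12\dots k}=\tfrac12\big(R_{12\dots k-1}M_{k-1,k}+M_{k-1,k}R_{12\dots k-1}\big),$$ where $R_{12\dots k-1}$ is understood as $R_{12\dots k-1}\otimes\mathbb{1}_k$ and $M_{k-1,k}$ as $\mathbb{1}_{1\cdots k-2}\otimes M_{k-1,k}$ on $H_1\otimes\cdots\otimes H_k$.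
   Context: Each $H_\alpha\cong(\mathbb{C}^2)^{\otimes n}$ is the Hilbert space of the $n$ qubits at time $t_\alpha$. Pauli matrices $\sigma_0=\mathbb{1},\sigma_1,\sigma_2,\sigma_3$; $n$-qubit Pauli matrices are $\tilde\sigma_i\in\{\sigma_0,\dots,\sigma_3\}^{\otimes n}$, $i=0,\dots,4^n-1$. The coarse-grained measurement of $\tilde\sigma_i$ at time $t_\alpha$ is the projective measurement $\{P^\alpha_\pm=(\mathbb{1}\pm\tilde\sigma_i)/2\}$ with outcomes $\pm1$ and Lüders update $\rho\mapsto P^\alpha_\pm\rho P^\alpha_\pm$. For indices $(i_1,\dots,i_k)$ the experiment is: prepare $\rho_1$; at each time $t_\alpha$ ($\alpha=1,\dots,k$) perform the coarse-grained measurement of $\tilde\sigma_{i_\alpha}$, and between $t_\alpha$ and $t_{\alpha+1}$ apply $\mathcal{M}_{\alpha+1|\alpha}$ to the post-measurement state. $\langle\tilde\sigma_{i_1},\dots,\tilde\sigma_{i_k}\rangle$ is the expectation of the product of the $k$ outcomes. The $k$-time pseudo-density matrix is $$R_{12\dots k}=\frac{1}{2^{kn}}\sum_{i_1,\dots,i_k=0}^{4^n-1}\langle\tilde\sigma_{i_1},\dots,\tilde\sigma_{i_k}\rangle\,\tilde\sigma_{i_1}\otimes\cdots\otimes\tilde\sigma_{i_k}.$$ *)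

(* Complex scalars: an arbitrary numClosedFieldType C
   (e.g. algC, or complex R for R a real closed field).
   Kronecker product: mathcomp-real-closed's [mxtens] ([A *t B], first factor
   is the major index, i.e. the usual |i> (x) |j> = |i*p+j> convention). *)
From HB Require Import structures.
From mathcomp Require Import all_boot all_order all_algebra.
From mathcomp Require Import mxtens.
Set Implicit Arguments. Unset Strict Implicit. Unset Printing Implicit Defensive.
Import Order.TTheory GRing.Theory Num.Theory.
Local Open Scope ring_scope.

Section QM.
Variable C : numClosedFieldType.

Definition adjmx (p q : nat) (A : 'M[C]_(p, q)) : 'M[C]_(q, p) :=
  (map_mx (fun z : C => z^*) A)^T.

Definition psd (p : nat) (A : 'M[C]_p) : Prop :=
  forall v : 'cV[C]_p, 0 <= (adjmx v *m A *m v) 0 0.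

Definition density (p : nat) (rho : 'M[C]_p) : Prop :=
  psd rho /\ \tr rho = 1.

Definition lin_map (p : nat) (f : 'M[C]_p -> 'M[C]_p) : Prop :=
  forall (a : C) (A B : 'M[C]_p), f (a *: A + B) = a *: f A + f B.

Definition trace_preserving (p : nat) (f : 'M[C]_p -> 'M[C]_p) : Prop :=
  forall A : 'M[C]_p, \tr (f A) = \tr A.

(* block (a,b) of X, seen as an element of M_q(M_p) *)
Definition mxblock_at (q p : nat) (a b : 'I_q) (X : 'M[C]_(q * p)) : 'M[C]_p :=
  \matrix_(i, j) X (mxtens_index (a, i)) (mxtens_index (b, j)).

(* id_q (x) f *)
Definition ampliate (q p : nat) (f : 'M[C]_p -> 'M[C]_p) (X : 'M[C]_(q * p))
  : 'M[C]_(q * p) :=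
  \sum_(a < q) \sum_(b < q) (delta_mx a b *t f (mxblock_at a b X)).

Definition completely_positive (p : nat) (f : 'M[C]_p -> 'M[C]_p) : Prop :=
  forall (q : nat) (X : 'M[C]_(q * p)), psd X -> psd (ampliate f X).

Definition cptp (p : nat) (f : 'M[C]_p -> 'M[C]_p) : Prop :=
  [/\ lin_map f, completely_positive f & trace_preserving f].

Definition choi (p : nat) (f : 'M[C]_p -> 'M[C]_p) : 'M[C]_(p * p) :=
  \sum_(i < p) \sum_(j < p) ((delta_mx i j)^T *t f (delta_mx i j)).

Definition pauli (a : 'I_4) : 'M[C]_2 :=
  \matrix_(i < 2, j < 2)
    if (a == 0 :> nat) then (i == j)%:R
    else if (a == 1 :> nat) then (i != j)%:R
    else if (a == 2 :> nat) then
      (if (i == 0 :> nat) && (j == 1 :> nat) then - 'i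
       else if (i == 1 :> nat) && (j == 0 :> nat) then 'i else 0)
    else (if i == j then (if i == 0 :> nat then 1 else -1) else 0).

Fixpoint tensf (d k : nat) : ('I_k -> 'M[C]_d) -> 'M[C]_(d ^ k) :=
  match k return ('I_k -> 'M[C]_d) -> 'M[C]_(d ^ k) with
  | 0 => fun _ => 1%:M
  | k'.+1 => fun A =>
      castmx (esym (expnS d k'), esym (expnS d k'))
             (A ord0 *t tensf (fun i : 'I_k' => A (lift ord0 i)))
  end.

Definition pauli_str (n : nat) (s : {ffun 'I_n -> 'I_4}) : 'M[C]_(2 ^ n) :=
  tensf (fun q => pauli (s q)).

Definition sgn (b : bool) : C := if b then 1 else -1.

Definition proj (p : nat) (sigma : 'M[C]_p) (b : bool) : 'M[C]_p :=
  2^-1 *: (1%:M + sgn b *: sigma).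

(* Unnormalised state after the k measurements with outcomes s, in the
   process: prepare rho; at time a (0-based) measure obs a (Lueders update),
   between times a and a+1 apply E a. *)
Definition final_state (p k : nat) (rho : 'M[C]_p) (E : nat -> 'M[C]_p -> 'M[C]_p)
  (obs : 'I_k -> 'M[C]_p) (s : {ffun 'I_k -> bool}) : 'M[C]_p :=
  foldl (fun X (a : 'I_k) =>
           let P := proj (obs a) (s a) in
           P *m (if (a == 0 :> nat) then X else E a.-1 X) *m P)
        rho (enum 'I_k).

(* < sigma_{i_1}, ..., sigma_{i_k} > : expectation of the product of outcomes *)
Definition corr (n k : nat) (rho : 'M[C]_(2 ^ n))
  (E : nat -> 'M[C]_(2 ^ n) -> 'M[C]_(2 ^ n))
  (idx : {ffun 'I_k -> {ffun 'I_n -> 'I_4}}) : C :=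
  \sum_(s : {ffun 'I_k -> bool})
     (\prod_(a < k) sgn (s a)) *
     \tr (final_state rho E (fun a => pauli_str (idx a)) s).

Definition pdm (n k : nat) (rho : 'M[C]_(2 ^ n))
  (E : nat -> 'M[C]_(2 ^ n) -> 'M[C]_(2 ^ n)) : 'M[C]_((2 ^ n) ^ k) :=
  ((2 ^ (k * n))%:R)^-1 *:
    \sum_(idx : {ffun 'I_k -> {ffun 'I_n -> 'I_4}})
       corr rho E idx *: tensf (fun a => pauli_str (idx a)).

Lemma expn_sq (d : nat) : (d * d)%N = (d ^ 2)%N.
Proof. by rewrite !expnS expn0 muln1. Qed.

Lemma expn_2S (d k : nat) : (d ^ k * (d * d))%N = (d ^ k.+2)%N.
Proof. by rewrite !expnSr mulnA. Qed.

Definition ext_right (d k : nat) (R : 'M[C]_(d ^ k)) : 'M[C]_(d ^ k.+1) :=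
  castmx (esym (expnSr d k), esym (expnSr d k)) (R *t (1%:M : 'M[C]_d)).

Definition ext_left (d k : nat) (M : 'M[C]_(d * d)) : 'M[C]_(d ^ k.+2) :=
  castmx (expn_2S d k, expn_2S d k) ((1%:M : 'M[C]_(d ^ k)) *t M).

End QM.

(* Measuring a Pauli observable sigma with outcome weights +-1 and Lueders
   updates replaces the state X by the Jordan product (sigma X + X sigma)/2,
   whatever sigma is.  Hence in the k-time pseudo-density matrix the first
   time can be peeled off: R_{1..k} = (1/d) sum_sigma sigma (x) R'(sigma),
   where R'(sigma) is the (k-1)-time pseudo-density matrix of the process
   started in M_{2|1}((sigma rho + rho sigma)/2).  Pauli completeness,
   sum_sigma sigma_ab sigma_ce = d [a = e][b = c], turns
   sum_sigma sigma (x) M(sigma A) into d (A (x) 1) M_12, and symmetrically,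
   which gives R_12; induction on k, peeling both sides, gives the
   recursion. *)

From HB Require Import structures.
From mathcomp Require Import all_boot all_order all_algebra.
From mathcomp Require Import mxtens.
From mathcomp Require Import ring zify.
Import Order.TTheory GRing.Theory Num.Theory.
Local Open Scope ring_scope.

Set Implicit Arguments. Unset Strict Implicit. Unset Printing Implicit Defensive.

Section CastTensor.
Variable R : comPzRingType.

Lemma castmx_is_linear m m' n n' (e : (m = m') * (n = n')) :
  linear (@castmx R m n m' n' e).
Proof. by case: e => e1 e2; case: m' / e1; case: n' / e2. Qed.

HB.instance Definition _ m m' n n' (e : (m = m') * (n = n')) :=
  GRing.isLinear.Build R 'M[R]_(m, n) 'M[R]_(m', n') _ (castmx e)
    (castmx_is_linear e).

Lemma castmx_irrelevance m m' n n' (e1 e2 : m = m') (f1 f2 : n = n')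
    (A : 'M[R]_(m, n)) :
  castmx (e1, f1) A = castmx (e2, f2) A.
Proof. by rewrite (eq_irrelevance e1 e2) (eq_irrelevance f1 f2). Qed.

Lemma castmx1 m m' (e : m = m') : castmx (e, e) (1%:M : 'M[R]_m) = 1%:M.
Proof. by case: m' / e. Qed.

Lemma tensmx_is_linear m n p q (A : 'M[R]_(m, n)) :
  linear (@tensmx R m n p q A).
Proof. by move=> c B D; apply/matrixP => i j; rewrite !mxE mulrDr mulrCA. Qed.

HB.instance Definition _ m n p q (A : 'M[R]_(m, n)) :=
  GRing.isLinear.Build R 'M[R]_(p, q) 'M[R]_(m * p, n * q) _ (tensmx A)
    (tensmx_is_linear A).

Lemma tensmxZl m n p q c (A : 'M[R]_(m, n)) (B : 'M[R]_(p, q)) :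
  (c *: A) *t B = c *: (A *t B).
Proof. by apply/matrixP => i j; rewrite !mxE mulrA. Qed.

Lemma tensmx_suml m n p q (I : finType) (A : I -> 'M[R]_(m, n))
    (B : 'M[R]_(p, q)) :
  (\sum_i A i) *t B = \sum_i A i *t B.
Proof.
apply/matrixP => i j; rewrite !mxE !summxE mulr_suml.
by apply: eq_bigr => k _; rewrite mxE.
Qed.

Lemma tensmx_castr m n p q p' q' (e1 : p = p') (e2 : q = q')
    (A : 'M[R]_(m, n)) (B : 'M[R]_(p, q)) :
  A *t castmx (e1, e2) B =
  castmx (f_equal (muln m) e1, f_equal (muln n) e2) (A *t B).
Proof. by case: p' / e1; case: q' / e2. Qed.

Lemma tensmx_castl m n p q m' n' (e1 : m = m') (e2 : n = n')
    (A : 'M[R]_(m, n)) (B : 'M[R]_(p, q)) :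
  castmx (e1, e2) A *t B =
  castmx (f_equal (muln^~ p) e1, f_equal (muln^~ q) e2) (A *t B).
Proof. by case: m' / e1; case: n' / e2. Qed.

Lemma mxtens_index_assoc m1 m2 m3 (i1 : 'I_m1) (i2 : 'I_m2) (i3 : 'I_m3) :
  cast_ord (esym (mulnA m1 m2 m3)) (mxtens_index (mxtens_index (i1, i2), i3))
  = mxtens_index (i1, mxtens_index (i2, i3)).
Proof. by apply: val_inj => /=; rewrite mulnDl -mulnA addnA. Qed.

Lemma tensmxA m1 n1 m2 n2 m3 n3 (A : 'M[R]_(m1, n1)) (B : 'M[R]_(m2, n2))
    (D : 'M[R]_(m3, n3)) :
  (A *t B) *t D = castmx (mulnA m1 m2 m3, mulnA n1 n2 n3) (A *t (B *t D)).
Proof.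
apply/matrixP => i j.
case: (mxtens_indexP i) => i12 i3; case: (mxtens_indexP i12) => i1 i2.
case: (mxtens_indexP j) => j12 j3; case: (mxtens_indexP j12) => j1 j2.
by rewrite castmxE !mxtens_index_assoc !tensmxE mulrA.
Qed.

Lemma tensmx11 m n : (1%:M : 'M[R]_m) *t (1%:M : 'M[R]_n) = 1%:M.
Proof.
apply/matrixP => i j.
case: (mxtens_indexP i) => i1 i2; case: (mxtens_indexP j) => j1 j2.
rewrite tensmxE !mxE -natrM mulnb; congr (_ %:R).
by rewrite (inj_eq (can_inj (@mxtens_indexK _ _))) xpair_eqE.
Qed.

Lemma mxtens_index_castP N m n (e : N = (m * n)%N) (a : 'I_N) :
  exists a1 a2, a = cast_ord (esym e) (mxtens_index (a1, a2)).
Proof.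
exists (mxtens_unindex (cast_ord e a)).1, (mxtens_unindex (cast_ord e a)).2.
by rewrite -surjective_pairing mxtens_unindexK cast_ordK.
Qed.

Lemma delta_mulmx p q (b a : 'I_p) (A : 'M[R]_(p, q)) :
  delta_mx b a *m A = \sum_c A a c *: delta_mx b c.
Proof.
rewrite [A in LHS]matrix_sum_delta mulmx_sumr (bigD1 a) //=.
rewrite [X in _ + X]big1 => [|i ne_ia]; last first.
  rewrite mulmx_sumr big1 // => c _; rewrite -scalemxAr mul_delta_mx_0 ?scaler0 //.
  by rewrite eq_sym.
rewrite addr0 mulmx_sumr; apply: eq_bigr => c _.
by rewrite -scalemxAr mul_delta_mx.
Qed.

Lemma mulmx_delta p q (b a : 'I_q) (A : 'M[R]_(p, q)) :
  A *m delta_mx b a = \sum_c A c b *: delta_mx c a.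
Proof.
apply: trmx_inj; rewrite trmx_mul trmx_delta delta_mulmx raddf_sum /=.
by apply: eq_bigr => c _; rewrite linearZ /= trmx_delta mxE.
Qed.

End CastTensor.

Section Jordan.
Variable R : comUnitRingType.

Definition jordan_mx p (A B : 'M[R]_p) : 'M[R]_p := 2^-1 *: (A *m B + B *m A).

Lemma castmx_jordan p p' (e : p = p') (A B : 'M[R]_p) :
  castmx (e, e) (jordan_mx A B) = jordan_mx (castmx (e, e) A) (castmx (e, e) B).
Proof. by case: p' / e. Qed.

Lemma tensmx_jordan p q (S : 'M[R]_p) (A B : 'M[R]_q) :
  S *t jordan_mx A B = jordan_mx (S *t A) (1%:M *t B).
Proof. by rewrite /jordan_mx linearZ linearD /= !tensmx_mul mulmx1 mul1mx. Qed.

Lemma jordan_mx_sumZl p (I : finType) c (A : I -> 'M[R]_p) (B : 'M[R]_p) :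
  jordan_mx (c *: \sum_i A i) B = c *: \sum_i jordan_mx (A i) B.
Proof.
rewrite /jordan_mx -scalemxAl -scalemxAr mulmx_suml mulmx_sumr -scalerDr.
rewrite -big_split !scaler_sumr; apply: eq_bigr => i _.
by rewrite !scalerA mulrC.
Qed.

End Jordan.

Section LinMap.
Variables (C : numClosedFieldType) (p : nat) (f : 'M[C]_p -> 'M[C]_p).
Hypothesis f_lin : lin_map f.

HB.instance Definition _ := GRing.isLinear.Build C 'M[C]_p 'M[C]_p _ f f_lin.

Lemma lin_mapD : {morph f : A B / A + B}.
Proof. exact: linearD. Qed.

Lemma lin_mapZ c : {morph f : A / c *: A}.
Proof. exact: linearZ. Qed.

Lemma lin_map_sum (I : finType) (A : I -> 'M[C]_p) :
  f (\sum_i A i) = \sum_i f (A i).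
Proof. exact: linear_sum. Qed.

End LinMap.

Section FinFun.
Variable T : finType.

Definition cons_ffun k (x : T) (g : {ffun 'I_k -> T}) : {ffun 'I_k.+1 -> T} :=
  [ffun i => if unlift ord0 i is Some j then g j else x].

Lemma cons_ffun0 k (x : T) (g : {ffun 'I_k -> T}) : cons_ffun x g ord0 = x.
Proof. by rewrite ffunE unlift_none. Qed.

Lemma cons_ffunS k (x : T) (g : {ffun 'I_k -> T}) j :
  cons_ffun x g (lift ord0 j) = g j.
Proof. by rewrite ffunE liftK. Qed.

Lemma big_ffunS (V : nmodType) k (F : {ffun 'I_k.+1 -> T} -> V) :
  \sum_f F f = \sum_(x : T) \sum_(g : {ffun 'I_k -> T}) F (cons_ffun x g).
Proof.
rewrite pair_big /= (reindex (fun xg => cons_ffun xg.1 xg.2)) //=.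
exists (fun f => (f ord0, [ffun j => f (lift ord0 j)])).
  move=> [x g] _ /=; rewrite cons_ffun0; congr (_, _).
  by apply/ffunP => j; rewrite ffunE cons_ffunS.
move=> f _ /=; apply/ffunP => i; rewrite ffunE.
by case: unliftP => [j ->|->]; rewrite ?ffunE.
Qed.

Lemma big_ffun0 (V : nmodType) (F : {ffun 'I_0 -> T} -> V) g0 :
  \sum_f F f = F g0.
Proof.
rewrite (eq_bigr (fun _ => F g0)) => [|g _]; last first.
  by congr F; apply/ffunP => -[].
by rewrite sumr_const card_ffun card_ord expn0.
Qed.

End FinFun.

Section Pauli.
Variable C : numClosedFieldType.

Lemma eq_tensf d k (A B : 'I_k -> 'M[C]_d) : A =1 B -> tensf A = tensf B.
Proof.
elim: k A B => [|k IH] A B eqAB //=.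
by rewrite eqAB (IH (fun i => A (lift ord0 i)) (fun i => B (lift ord0 i))).
Qed.

Lemma tensf_cons d k (T : finType) (F : T -> 'M[C]_d) x (g : {ffun 'I_k -> T}) :
  tensf (fun a => F (cons_ffun x g a)) =
  castmx (esym (expnS d k), esym (expnS d k)) (F x *t tensf (fun a => F (g a))).
Proof.
rewrite /= cons_ffun0; congr (castmx _ (_ *t _)).
by apply: eq_tensf => a; rewrite cons_ffunS.
Qed.

Lemma pauli_completeness1 (a b c e : 'I_2) :
  \sum_(x < 4) pauli C x a b * pauli C x c e = 2 * ((a == e) && (b == c))%:R.
Proof.
rewrite !big_ord_recl big_ord0 !mxE /=.
have ii : 'i * 'i = -1 :> C by exact: mulCii.
case: a => [[|[|?]] ?] //; case: b => [[|[|?]] ?] //;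
case: c => [[|[|?]] ?] //; case: e => [[|[|?]] ?] //=;
rewrite ?mulNr ?mulrN ?ii ?opprK; ring.
Qed.

Lemma pauli_str_completeness n (a b c e : 'I_(2 ^ n)) :
  \sum_(s : {ffun 'I_n -> 'I_4}) pauli_str C s a b * pauli_str C s c e
    = (2 ^ n)%:R * ((a == e) && (b == c))%:R.
Proof.
elim: n a b c e => [|n IH] a b c e.
  rewrite (big_ffun0 _ [ffun=> ord0]) /pauli_str /= !mxE.
  have all_eq (x y : 'I_(2 ^ 0)) : x == y by case: x y => [[|?] ?] [[|?] ?].
  by rewrite !all_eq mulr1.
have [a1 [a2 ->]] := mxtens_index_castP (expnS 2 n) a.
have [b1 [b2 ->]] := mxtens_index_castP (expnS 2 n) b.
have [c1 [c2 ->]] := mxtens_index_castP (expnS 2 n) c.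
have [e1 [e2 ->]] := mxtens_index_castP (expnS 2 n) e.
rewrite big_ffunS.
under eq_bigr => x _.
  under eq_bigr => g _ do
    rewrite /pauli_str (tensf_cons (pauli C)) !castmxE !cast_ordK !tensmxE mulrACA.
  rewrite -mulr_sumr IH; over.
rewrite -mulr_suml pauli_completeness1 !(inj_eq (@cast_ord_inj _ _ _)).
rewrite !(inj_eq (can_inj (@mxtens_indexK _ _))) !xpair_eqE.
rewrite expnS natrM mulrACA -!natrM mulnb.
by case: (a1 == e1); case: (a2 == e2); case: (b1 == c1); case: (b2 == c2).
Qed.

End Pauli.

Section PauliBasis.
Variables (C : numClosedFieldType) (n : nat).
Local Notation d := (2 ^ n)%N.
Local Notation sig := (@pauli_str C n).

Lemma sum_pauli_str_entry (a b : 'I_d) :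
  \sum_s sig s a b *: sig s = d%:R *: delta_mx b a.
Proof.
apply/matrixP => c e; rewrite summxE !mxE.
under eq_bigr do rewrite mxE.
by rewrite pauli_str_completeness [e == a]eq_sym [c == b]eq_sym andbC.
Qed.

Lemma pauli_str_expansion (Y : 'M[C]_d) :
  \sum_s \tr (sig s *m Y) *: sig s = d%:R *: Y.
Proof.
have trE s : \tr (sig s *m Y) = \sum_a \sum_b Y b a * sig s a b.
  by apply: eq_bigr => a _; rewrite mxE; apply: eq_bigr => b _; rewrite mulrC.
under eq_bigr do rewrite trE scaler_suml; rewrite exchange_big /=.
under eq_bigr do (under eq_bigr do rewrite scaler_suml; rewrite exchange_big /=).
rewrite [in RHS](matrix_sum_delta Y) scaler_sumr exchange_big /=.
apply: eq_bigr => a _; rewrite scaler_sumr; apply: eq_bigr => b _.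
under eq_bigr do rewrite -scalerA.
by rewrite -scaler_sumr sum_pauli_str_entry scalerA mulrC -scalerA.
Qed.

Section LinearMap.
Variable F : 'M[C]_d -> 'M[C]_d.
Hypothesis F_lin : lin_map F.

HB.instance Definition _ := GRing.isLinear.Build C 'M[C]_d 'M[C]_d _ F F_lin.

Lemma sum_pauli_str_tens :
  \sum_s sig s *t F (sig s) =
  d%:R *: \sum_a \sum_b delta_mx a b *t F (delta_mx b a).
Proof.
transitivity (\sum_s \sum_a \sum_b delta_mx a b *t (sig s a b *: F (sig s))).
  apply: eq_bigr => s _; rewrite {1}(matrix_sum_delta (sig s)) tensmx_suml.
  apply: eq_bigr => a _; rewrite tensmx_suml; apply: eq_bigr => b _.
  by rewrite tensmxZl linearZ.
rewrite scaler_sumr exchange_big; apply: eq_bigr => a _ /=.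
rewrite scaler_sumr exchange_big; apply: eq_bigr => b _ /=.
rewrite -[in RHS]linearZ /= -[in RHS]linearZ /= -sum_pauli_str_entry.
by rewrite !linear_sum; apply: eq_bigr => s _; rewrite !linearZ.
Qed.

End LinearMap.

Section Choi.
Variable E : 'M[C]_d -> 'M[C]_d.
Hypothesis E_lin : lin_map E.

HB.instance Definition _ := GRing.isLinear.Build C 'M[C]_d 'M[C]_d _ E E_lin.

Lemma sum_pauli_str_choi_mull (A : 'M[C]_d) :
  \sum_s sig s *t E (sig s *m A) = d%:R *: ((A *t 1%:M) *m choi E).
Proof.
rewrite (sum_pauli_str_tens (F := fun X => E (X *m A))); last first.
  by move=> c X Y; rewrite mulmxDl -scalemxAl linearP.
congr (_ *: _); rewrite /choi mulmx_sumr exchange_big /=.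
apply: eq_bigr => b _; rewrite mulmx_sumr.
transitivity (\sum_c \sum_a A a c *: (delta_mx a b *t E (delta_mx b c))).
  rewrite exchange_big; apply: eq_bigr => a _ /=.
  by rewrite delta_mulmx !linear_sum; apply: eq_bigr => c _; rewrite !linearZ.
apply: eq_bigr => c _.
rewrite trmx_delta tensmx_mul mul1mx mulmx_delta tensmx_suml.
by apply: eq_bigr => a _; rewrite tensmxZl.
Qed.

Lemma sum_pauli_str_choi_mulr (A : 'M[C]_d) :
  \sum_s sig s *t E (A *m sig s) = d%:R *: (choi E *m (A *t 1%:M)).
Proof.
rewrite (sum_pauli_str_tens (F := fun X => E (A *m X))); last first.
  by move=> c X Y; rewrite mulmxDr -scalemxAr linearP.
congr (_ *: _); rewrite /choi [in RHS]exchange_big mulmx_suml /=.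
apply: eq_bigr => a _; rewrite mulmx_suml.
transitivity (\sum_c \sum_b A c b *: (delta_mx a b *t E (delta_mx c a))).
  rewrite exchange_big; apply: eq_bigr => b _ /=.
  by rewrite mulmx_delta !linear_sum; apply: eq_bigr => c _; rewrite !linearZ.
apply: eq_bigr => c _.
rewrite trmx_delta tensmx_mul mulmx1 delta_mulmx tensmx_suml.
by apply: eq_bigr => b _; rewrite tensmxZl.
Qed.

End Choi.

End PauliBasis.

Lemma eq_foldl (T S : Type) (f g : S -> T -> S) x s :
  f =2 g -> foldl f x s = foldl g x s.
Proof. by move=> eq_fg; elim: s x => //= a s IH x; rewrite eq_fg IH. Qed.

Lemma foldl_map (T U S : Type) (f : S -> T -> S) (h : U -> T) x s :
  foldl f x (map h s) = foldl (fun X a => f X (h a)) x s.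
Proof. by elim: s x => //= a s IH x. Qed.

Section Measurement.
Variables (C : numClosedFieldType) (p : nat).
Implicit Types (rho X sg : 'M[C]_p) (E : nat -> 'M[C]_p -> 'M[C]_p).

Lemma sum_sgn_proj sg X :
  \sum_(b : bool) sgn C b *: (proj sg b *m X *m proj sg b) = jordan_mx sg X.
Proof.
have expand s : (1%:M + s *: sg) *m X *m (1%:M + s *: sg)
    = X + s *: (sg *m X + X *m sg) + (s * s) *: (sg *m X *m sg).
  rewrite !mulmxDl !mulmxDr !mul1mx !mulmx1 -!scalemxAl -!scalemxAr !scalerA.
  by apply/matrixP => i j; rewrite !mxE; ring.
rewrite big_bool /proj /sgn /jordan_mx -!scalemxAl -!scalemxAr !expand.
have two_neq0 : (2 : C) != 0 by rewrite pnatr_eq0.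
by apply/matrixP => i j; rewrite !mxE; field.
Qed.

Section FinalState.
Variables (k : nat) (E : nat -> 'M[C]_p -> 'M[C]_p).

Lemma final_state_lin (obs : 'I_k -> 'M[C]_p) s :
  (forall i, (i.+1 < k)%N -> lin_map (E i)) ->
  lin_map (fun rho => final_state rho E obs s).
Proof.
move=> E_lin c A B; rewrite /final_state.
elim: (enum 'I_k) c A B => //= a r IH c A B; rewrite -IH; congr foldl.
have -> : (if a == 0 :> nat then c *: A + B else E a.-1 (c *: A + B))
   = c *: (if a == 0 :> nat then A else E a.-1 A)
     + (if a == 0 :> nat then B else E a.-1 B).
  by case: ifP => // /negbT; rewrite -lt0n => a_gt0; apply: E_lin; rewrite prednK.
by rewrite mulmxDr mulmxDl -(scalemxAr c) -(scalemxAl c).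
Qed.

Lemma eq_final_state rho (obs1 obs2 : 'I_k -> 'M[C]_p) s :
  obs1 =1 obs2 -> final_state rho E obs1 s = final_state rho E obs2 s.
Proof. by move=> eq_obs; apply: eq_foldl => X a; rewrite eq_obs. Qed.

End FinalState.

Lemma final_state1 rho E (obs : 'I_1 -> 'M[C]_p) s :
  final_state rho E obs s = proj (obs ord0) (s ord0) *m rho *m proj (obs ord0) (s ord0).
Proof. by rewrite /final_state enum_ordSl enum_ord0. Qed.

Lemma final_stateSS k rho E (obs : 'I_k.+2 -> 'M[C]_p) s :
  final_state rho E obs s =
  final_state (E 0%N (proj (obs ord0) (s ord0) *m rho *m proj (obs ord0) (s ord0)))
    (fun i => E i.+1) (fun a => obs (lift ord0 a)) [ffun a => s (lift ord0 a)].
Proof.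
rewrite /final_state !enum_ordSl /= !foldl_map ffunE.
by apply: eq_foldl => X a /=; rewrite !ffunE /bump add0n.
Qed.

Definition signed_state k rho E (obs : 'I_k -> 'M[C]_p) : 'M[C]_p :=
  \sum_(s : {ffun 'I_k -> bool}) (\prod_(a < k) sgn C (s a)) *: final_state rho E obs s.

Lemma signed_state_lin k E (obs : 'I_k -> 'M[C]_p) :
  (forall i, (i.+1 < k)%N -> lin_map (E i)) ->
  lin_map (fun rho => signed_state rho E obs).
Proof.
move=> E_lin c A B; rewrite /signed_state scaler_sumr -big_split /=.
apply: eq_bigr => s _.
by rewrite final_state_lin // scalerDr !scalerA mulrC.
Qed.

Lemma eq_signed_state k rho E (obs1 obs2 : 'I_k -> 'M[C]_p) :
  obs1 =1 obs2 -> signed_state rho E obs1 = signed_state rho E obs2.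
Proof. by move=> eq_obs; apply: eq_bigr => s _; rewrite (eq_final_state _ _ _ eq_obs). Qed.

Lemma signed_state1 rho E (obs : 'I_1 -> 'M[C]_p) :
  signed_state rho E obs = jordan_mx (obs ord0) rho.
Proof.
rewrite /signed_state big_ffunS -sum_sgn_proj; apply: eq_bigr => b _.
by rewrite (big_ffun0 _ [ffun=> true]) big_ord1 final_state1 cons_ffun0.
Qed.

Lemma signed_stateSS k rho E (obs : 'I_k.+2 -> 'M[C]_p) :
  (forall i, (i.+1 < k.+2)%N -> lin_map (E i)) ->
  signed_state rho E obs =
  signed_state (E 0%N (jordan_mx (obs ord0) rho)) (fun i => E i.+1)
    (fun a => obs (lift ord0 a)).
Proof.
move=> E_lin.
have E'_lin i : (i.+1 < k.+1)%N -> lin_map (E i.+1) by move=> i_lt; apply: E_lin.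
rewrite -sum_sgn_proj (lin_map_sum (E_lin 0%N isT)).
rewrite (lin_map_sum (signed_state_lin _ E'_lin)) {1}/signed_state big_ffunS.
apply: eq_bigr => b _; rewrite (lin_mapZ (E_lin 0%N isT)).
rewrite (lin_mapZ (signed_state_lin _ E'_lin)) scaler_sumr; apply: eq_bigr => g _.
rewrite big_ord_recl cons_ffun0 final_stateSS cons_ffun0 -scalerA.
congr (_ *: (_ *: _)); first by apply: eq_bigr => a _; rewrite cons_ffunS.
by congr final_state; apply/ffunP => a; rewrite !ffunE liftK.
Qed.

End Measurement.

Section PseudoDensity.
Variables (C : numClosedFieldType) (n : nat).
Local Notation d := (2 ^ n)%N.
Local Notation S := {ffun 'I_n -> 'I_4}.
Local Notation sig := (@pauli_str C n).
Implicit Types (rho : 'M[C]_d) (E : nat -> 'M[C]_d -> 'M[C]_d).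

Lemma corrE k rho E (idx : {ffun 'I_k -> S}) :
  corr rho E idx = \tr (signed_state rho E (fun a => sig (idx a))).
Proof.
by rewrite /corr /signed_state raddf_sum; apply: eq_bigr => s _ /=; rewrite mxtraceZ.
Qed.

Lemma corr1 rho E (idx : {ffun 'I_1 -> S}) :
  corr rho E idx = \tr (sig (idx ord0) *m rho).
Proof.
rewrite corrE signed_state1 /jordan_mx mxtraceZ mxtraceD [\tr (rho *m _)]mxtrace_mulC.
have two_neq0 : (2 : C) != 0 by rewrite pnatr_eq0.
by field.
Qed.

Lemma corrSS k rho E (idx : {ffun 'I_k.+2 -> S}) :
  (forall i, (i.+1 < k.+2)%N -> lin_map (E i)) ->
  corr rho E idx =
  corr (E 0%N (jordan_mx (sig (idx ord0)) rho)) (fun i => E i.+1)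
    [ffun a => idx (lift ord0 a)].
Proof.
move=> E_lin; rewrite !corrE signed_stateSS //; congr mxtrace.
by apply: eq_signed_state => a; rewrite ffunE.
Qed.

Lemma pdm1 rho E : pdm 1 rho E = castmx (esym (expn1 d), esym (expn1 d)) rho.
Proof.
rewrite /pdm big_ffunS mul1n.
under eq_bigr => x _.
  rewrite (big_ffun0 _ [ffun=> [ffun=> ord0]]) corr1 cons_ffun0 tensf_cons /=.
  rewrite tens_mx_scalar scale1r castmx_comp -linearZ /=.
  rewrite (castmx_irrelevance _ (esym (expn1 d)) _ (esym (expn1 d))).
  over.
rewrite -linear_sum -linearZ /= pauli_str_expansion scalerA mulVf ?scale1r //.
by rewrite pnatr_eq0 expn_eq0.
Qed.

Lemma pdmSS k rho E :
  (forall i, (i.+1 < k.+2)%N -> lin_map (E i)) ->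
  pdm k.+2 rho E = (d%:R)^-1 *: \sum_(x : S)
     castmx (esym (expnS d k.+1), esym (expnS d k.+1))
       (sig x *t pdm k.+1 (E 0%N (jordan_mx (sig x) rho)) (fun i => E i.+1)).
Proof.
move=> E_lin; rewrite /pdm big_ffunS.
have -> : (2 ^ (k.+2 * n))%:R = d%:R * (2 ^ (k.+1 * n))%:R :> C.
  by rewrite -natrM -expnD -mulSn.
rewrite invfM -scalerA scaler_sumr; congr (_ *: _); apply: eq_bigr => x _.
rewrite 2!linearZ; congr (_ *: _); rewrite 2!linear_sum; apply: eq_bigr => g _.
rewrite tensf_cons corrSS // cons_ffun0 2!linearZ; congr (_ *: _).
by congr corr; apply/ffunP => a; rewrite ffunE cons_ffunS.
Qed.

End PseudoDensity.

Section Extensions.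
Variables (C : numClosedFieldType) (d : nat).

Lemma ext_right_is_linear k : linear (@ext_right C d k).
Proof.
move=> c A B; rewrite /ext_right -linearP; congr castmx.
by apply/matrixP => i j; rewrite !mxE mulrDl mulrA.
Qed.

HB.instance Definition _ k :=
  GRing.isLinear.Build C 'M[C]_(d ^ k) 'M[C]_(d ^ k.+1) _ (@ext_right C d k)
    (@ext_right_is_linear k).

Lemma tensmx_ext_right k (S : 'M[C]_d) (X : 'M[C]_(d ^ k)) :
  castmx (esym (expnS d k.+1), esym (expnS d k.+1)) (S *t ext_right X)
  = ext_right (castmx (esym (expnS d k), esym (expnS d k)) (S *t X)).
Proof.
rewrite /ext_right tensmx_castr castmx_comp tensmx_castl castmx_comp.
by rewrite tensmxA !castmx_comp; apply: castmx_irrelevance.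
Qed.

Lemma tensmx1_ext_left k (M : 'M[C]_(d * d)) :
  castmx (esym (expnS d k.+2), esym (expnS d k.+2)) (1%:M *t ext_left k M)
  = ext_left k.+1 M.
Proof.
rewrite /ext_left tensmx_castr castmx_comp.
have -> : (1%:M : 'M[C]_d) *t ((1%:M : 'M[C]_(d ^ k)) *t M) =
    castmx (esym (mulnA _ _ _), esym (mulnA _ _ _)) ((1%:M *t 1%:M) *t M).
  by rewrite tensmxA castmx_comp castmx_id.
rewrite tensmx11 -(castmx1 C (esym (expnS d k))) tensmx_castl !castmx_comp.
exact: castmx_irrelevance.
Qed.

End Extensions.

Section Recursion.
Variables (C : numClosedFieldType) (n : nat).
Local Notation d := (2 ^ n)%N.
Implicit Types (rho : 'M[C]_d) (E : nat -> 'M[C]_d -> 'M[C]_d).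

Lemma pdm2_choi rho E : lin_map (E 0%N) ->
  pdm 2 rho E = castmx (expn_sq d, expn_sq d) (jordan_mx (rho *t 1%:M) (choi (E 0%N))).
Proof.
move=> E0_lin; rewrite pdmSS; last by case.
under eq_bigr => x _ do rewrite pdm1 tensmx_castr castmx_comp
  (castmx_irrelevance _ (expn_sq d) _ (expn_sq d)).
rewrite -linear_sum -linearZ; congr castmx.
under eq_bigr do rewrite /jordan_mx (lin_mapZ E0_lin) (lin_mapD E0_lin) linearZ linearD.
rewrite -scaler_sumr big_split /= sum_pauli_str_choi_mull // sum_pauli_str_choi_mulr //.
rewrite -scalerDr !scalerA; congr (_ *: _).
have two_neq0 : (2 : C) != 0 by rewrite pnatr_eq0.
have d_neq0 : (d%:R : C) != 0 by rewrite pnatr_eq0 expn_eq0.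
by field.
Qed.

Lemma pdm_recursion j rho E :
  (forall i, (i.+1 < j.+2)%N -> lin_map (E i)) ->
  pdm j.+2 rho E = jordan_mx (ext_right (pdm j.+1 rho E)) (ext_left j (choi (E j))).
Proof.
elim: j rho E => [|j IH] rho E E_lin.
  rewrite pdm2_choi ?castmx_jordan; last exact: E_lin.
  rewrite /ext_right /ext_left pdm1 tensmx_castl tens_scalar_mx scale1r !castmx_comp.
  by congr jordan_mx; apply: castmx_irrelevance.
have E'_lin i : (i.+1 < j.+2)%N -> lin_map (E i.+1) by move=> i_lt; apply: E_lin.
rewrite pdmSS // [in RHS]pdmSS => [|i i_lt]; last by apply: E_lin; apply: ltnW.
under eq_bigr do rewrite IH // tensmx_jordan castmx_jordan tensmx_ext_right tensmx1_ext_left.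
by rewrite -jordan_mx_sumZl -linear_sum -linearZ.
Qed.

End Recursion.

Theorem theorem2 (C : numClosedFieldType) (n m : nat)
  (rho1 : 'M[C]_(2 ^ n)) (E : nat -> 'M[C]_(2 ^ n) -> 'M[C]_(2 ^ n)) :
  (1 <= n)%N -> (2 <= m)%N ->
  density rho1 ->
  (forall a : nat, (a < m.-1)%N -> cptp (E a)) ->
  pdm 2 rho1 E =
    castmx (expn_sq (2 ^ n), expn_sq (2 ^ n))
      (2^-1 *: ((rho1 *t 1%:M) *m choi (E 0%N) + choi (E 0%N) *m (rho1 *t 1%:M)))
  /\
  (forall j : nat, (j.+3 <= m)%N ->
     pdm j.+3 rho1 E =
       2^-1 *: (ext_right (pdm j.+2 rho1 E) *m ext_left j.+1 (choi (E j.+1))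
              + ext_left j.+1 (choi (E j.+1)) *m ext_right (pdm j.+2 rho1 E))).
Proof.
move=> _ m_ge2 _ E_cptp.
have E_lin a : (a < m.-1)%N -> lin_map (E a) by case/E_cptp.
split; first by apply: pdm2_choi; apply: E_lin; lia.
by move=> j j_lt; apply: pdm_recursion => i i_lt; apply: E_lin; lia.
Qed.
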